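(* Let $(T_1,T_2,T_3,T_4)$ be an ordered binary forest on $\{1,\dots,m\}$, let $x_i=|L(T_i)|$ for $i=1,2,3,4$, and assume $x_1\ge x_2$, $x_3\ge x_4$ and $x_1>x_3$. Let $T_0$ be the binary phylogenetic tree with root $z$ having children $a$ and $b$, where $a$ has children the roots of $T_1$ and $T_2$, and $b$ has children the roots of $T_3$ and $T_4$. Let $n\ge m$ and let $T$ be a binary phylogenetic tree with $n$ leaves having $T_0$ as the subtree rooted at some node. If $\Phi(T)$ is minimum among all binary phylogenetic trees with $n$ leaves, then $x_4\ge x_2$.
   Context: A phylogenetic tree on a finite set $S$ is a rooted tree whose leaves are bijectively labeled by $S$, every internal node having at least two children; binary means exactly two children; a tree with $n$ leaves is one on $\{1,\dots,n\}$. $L(T)$ is the leaf set. An ordered binary $k$-forest on $S$ is a sequence of $k$ binary phylogenetic trees on pairwise disjoint sets with union $S$. The subtree rooted at a node $v$ is the subgraph induced on the descendants of $v$. The depth $\delta_T(v)$ is the number of arcs from the root to $v$; for leaves $i\ne j$, $\varphi_T(i,j)=\delta_T(LCA_T(i,j))$ ($LCA$ = lowest common ancestor), and $\Phi(T)$ is the sum of $\varphi_T(i,j)$ over all unordered pairs of distinct leaves. *)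

From mathcomp Require Import all_boot.
Set Implicit Arguments. Unset Strict Implicit. Unset Printing Implicit Defensive.

(* Children order is immaterial: see [tiso] and [Phi] (which is order-invariant). *)
Inductive btree : Type :=
| Leaf of nat
| Node of btree & btree.

Fixpoint leaves (t : btree) : seq nat :=
  match t with
  | Leaf x => [:: x]
  | Node l r => leaves l ++ leaves r
  end.

Definition bphylo_n (n : nat) (t : btree) : Prop :=
  perm_eq (leaves t) (iota 1 n).

Inductive subtree_at : btree -> btree -> Prop :=
| sub_refl t : subtree_at t t
| sub_l s l r : subtree_at s l -> subtree_at s (Node l r)
| sub_r s l r : subtree_at s r -> subtree_at s (Node l r).

Inductive tiso : btree -> btree -> Prop :=
| iso_leaf x : tiso (Leaf x) (Leaf x)
| iso_node l r l' r' : tiso l l' -> tiso r r' -> tiso (Node l r) (Node l' r')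
| iso_swap l r l' r' : tiso l r' -> tiso r l' -> tiso (Node l r) (Node l' r').

(* phi t i j = depth of LCA of leaves i and j (for distinct leaves of t). *)
Fixpoint phi (t : btree) (i j : nat) : nat :=
  match t with
  | Leaf _ => 0
  | Node l r =>
      if (i \in leaves l) && (j \in leaves l) then (phi l i j).+1
      else if (i \in leaves r) && (j \in leaves r) then (phi r i j).+1
      else 0
  end.

Definition Phi (t : btree) : nat :=
  \sum_(i <- leaves t) \sum_(j <- leaves t | i < j) phi t i j.

From mathcomp Require Import all_boot zify.

(* Phi satisfies the recursion
     Phi (Node l r) = Phi l + Phi r + C(|l|,2) + C(|r|,2),
   because every pair of leaves inside one child has its LCA one level deeper
   and cross pairs contribute 0.  Consequently Phi is "local": replacing a
   subtree S of T by a tree S' on the same leaves changes Phi T by exactly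
   Phi S' - Phi S, so every subtree of a Phi-minimal tree is itself Phi-minimal
   on its leaf set.  Applied to a subtree ((A,B),(C,D)), exchanging B with D or
   with C changes Phi only through the products of sibling sizes, so minimality
   forces the pairing {A,B},{C,D} to minimise ab + cd among the three pairings
   ("balanced quartet").  This condition is invariant under the symmetries of
   the unordered tree, hence transfers along [tiso] to (T1,T2,T3,T4), and with
   x1 > x3 the inequality x1 x2 + x3 x4 <= x1 x4 + x3 x2 gives x2 <= x4.
   Binomial coefficients are abstracted with [set] before calling [lia],
   which would otherwise expand them into nonlinear terms. *)

Notation nleaves t := (size (leaves t)).

Section PhiMinimality.

Set Implicit Arguments.
Unset Strict Implicit.

Definition pair_sum (s : seq nat) (f : nat -> nat -> nat) : nat :=
  \sum_(i <- s) \sum_(j <- s | i < j) f i j.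

Lemma pair_sum_cat (s1 s2 : seq nat) (f : nat -> nat -> nat) :
  pair_sum (s1 ++ s2) f = pair_sum s1 f + pair_sum s2 f
    + \sum_(i <- s1) \sum_(j <- s2 | i < j) f i j
    + \sum_(i <- s2) \sum_(j <- s1 | i < j) f i j.
Proof.
rewrite /pair_sum big_cat /=.
under eq_bigr do rewrite big_cat /=.
under [X in _ + X]eq_bigr do rewrite big_cat /=.
rewrite !big_split /= -!addnA; congr (_ + _).
by rewrite [RHS]addnC [LHS]addnA.
Qed.

Lemma pair_sum_eq (s : seq nat) (f g : nat -> nat -> nat) :
  {in s &, f =2 g} -> pair_sum s f = pair_sum s g.
Proof.
move=> fg; rewrite /pair_sum; apply: eq_big_seq => i si.
rewrite big_seq_cond [RHS]big_seq_cond.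
by apply: eq_bigr => j /andP [sj _]; rewrite fg.
Qed.

Lemma pair_sum_add (s : seq nat) (f g : nat -> nat -> nat) :
  pair_sum s (fun i j => f i j + g i j) = pair_sum s f + pair_sum s g.
Proof. by rewrite /pair_sum -big_split; apply: eq_bigr => i _; rewrite big_split. Qed.

Lemma count_above_below (x : nat) (s : seq nat) : x \notin s ->
  count (fun j => x < j) s + count (fun j => j < x) s = size s.
Proof.
elim: s => //= y s IH; rewrite inE negb_or => /andP [xy /IH <-].
by case: ltngtP xy => // *; lia.
Qed.

Lemma pair_count (s : seq nat) :
  uniq s -> pair_sum s (fun _ _ => 1) = 'C(size s, 2).
Proof.
elim: s => [|x s IH] /=; first by rewrite /pair_sum big_nil.
move=> /andP [xs us].
have below : \sum_(i <- s) \sum_(j <- [:: x] | i < j) 1 = count (fun i => i < x) s.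
  rewrite -sum1_count [RHS]big_mkcond.
  by apply: eq_bigr => i _; rewrite big_mkcond big_seq1.
rewrite -cat1s pair_sum_cat IH // {1}/pair_sum /= !big_seq1 /=.
rewrite below !sum1_count /= ltnn binS bin1.
by rewrite -[X in _ = _ + X](count_above_below xs) addnA.
Qed.

Lemma Phi_pair_sum t : Phi t = pair_sum (leaves t) (phi t).
Proof. by []. Qed.

Lemma Phi_node l r : uniq (leaves l ++ leaves r) ->
  Phi (Node l r) = Phi l + Phi r + 'C(nleaves l, 2) + 'C(nleaves r, 2).
Proof.
rewrite cat_uniq => /and3P [ul /hasPn disj ur].
have nlr i : i \in leaves r -> i \in leaves l = false.
  by move=> /disj /negbTE.
have nrl i : i \in leaves l -> i \in leaves r = false.
  by move=> li; apply/negP => /nlr; rewrite li.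
rewrite !Phi_pair_sum /= pair_sum_cat -(pair_count ul) -(pair_count ur).
have -> : pair_sum (leaves l) (phi (Node l r))
          = pair_sum (leaves l) (phi l) + pair_sum (leaves l) (fun _ _ => 1).
  by rewrite -pair_sum_add; apply: pair_sum_eq => i j li lj /=; rewrite li lj addn1.
have -> : pair_sum (leaves r) (phi (Node l r))
          = pair_sum (leaves r) (phi r) + pair_sum (leaves r) (fun _ _ => 1).
  rewrite -pair_sum_add; apply: pair_sum_eq => i j ri rj /=.
  by rewrite nlr // ri rj addn1.
rewrite [\sum_(i <- leaves l) _]big1_seq => [|i /andP [_ li]]; last first.
  by rewrite big1_seq // => j /andP [_ rj] /=; rewrite (nlr j rj) (nrl i li) !andbF.
rewrite [\sum_(i <- leaves r) _]big1_seq => [|i /andP [_ ri]]; last first.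
  by rewrite big1_seq // => j /andP [_ lj] /=; rewrite (nlr i ri) (nrl j lj) andbF.
lia.
Qed.

Lemma subtree_uniq S T : subtree_at S T -> uniq (leaves T) -> uniq (leaves S).
Proof.
by elim=> [//|s l r _ IH|s l r _ IH] /=; rewrite cat_uniq => /and3P [? _ ?]; auto.
Qed.

Lemma Phi_subtree_replace S S' T :
  subtree_at S T -> perm_eq (leaves S) (leaves S') -> uniq (leaves T) ->
  exists T', perm_eq (leaves T') (leaves T) /\ Phi T + Phi S' = Phi T' + Phi S.
Proof.
elim=> [t|s l r _ IH|s l r _ IH] pS uT.
- by exists S'; rewrite perm_sym; split; last lia.
- have ul : uniq (leaves l) by move: uT; rewrite cat_uniq => /and3P [].
  have [l' [pl E]] := IH pS ul.
  exists (Node l' r); split; first by rewrite /= perm_cat2r.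
  have ul'r : uniq (leaves l' ++ leaves r).
    by rewrite (perm_uniq (_ : perm_eq _ (leaves l ++ leaves r))) ?perm_cat2r.
  rewrite !Phi_node // (perm_size pl).
  by set cl := 'C(_, 2); set cr := 'C(_, 2); lia.
- have ur : uniq (leaves r) by move: uT; rewrite cat_uniq => /and3P [].
  have [r' [pr E]] := IH pS ur.
  exists (Node l r'); split; first by rewrite /= perm_cat2l.
  have ulr' : uniq (leaves l ++ leaves r').
    by rewrite (perm_uniq (_ : perm_eq _ (leaves l ++ leaves r))) ?perm_cat2l.
  rewrite !Phi_node // (perm_size pr).
  by set cl := 'C(_, 2); set cr := 'C(_, 2); lia.
Qed.

Lemma minimal_subtree n T S S' : bphylo_n n T -> subtree_at S T ->
  (forall T' : btree, bphylo_n n T' -> Phi T <= Phi T') ->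
  perm_eq (leaves S) (leaves S') -> Phi S <= Phi S'.
Proof.
move=> bT sub minT pS.
have uT : uniq (leaves T) by rewrite (perm_uniq bT) iota_uniq.
have [T' [pT' E]] := Phi_subtree_replace sub pS uT.
by have := minT T' (perm_trans pT' bT); lia.
Qed.

(* Pairs in a disjoint union: inside the first part, across, or inside the second. *)
Lemma bin2D a b : 'C(a + b, 2) = 'C(a, 2) + a * b + 'C(b, 2).
Proof.
elim: b => [|b IH]; first by rewrite addn0 muln0 bin0n !addn0.
by rewrite addnS !binS !bin1 IH mulnS; lia.
Qed.

(* Phi of a quartet ((A,B),(C,D)): besides terms symmetric in A,B,C,D,
   only the products of sibling sizes depend on the pairing. *)
Lemma Phi_quartet A B C D :
  uniq (leaves (Node (Node A B) (Node C D))) ->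
  Phi (Node (Node A B) (Node C D)) = Phi A + Phi B + Phi C + Phi D
    + 2 * ('C(nleaves A, 2) + 'C(nleaves B, 2) + 'C(nleaves C, 2) + 'C(nleaves D, 2))
    + nleaves A * nleaves B + nleaves C * nleaves D.
Proof.
move=> u; have := u; rewrite /= cat_uniq => /and3P [uAB _ uCD].
rewrite !Phi_node //= !size_cat !bin2D.
by set cA := 'C(nleaves A, 2); set cB := 'C(nleaves B, 2);
   set cC := 'C(nleaves C, 2); set cD := 'C(nleaves D, 2); lia.
Qed.

Definition balanced_quartet (a b c d : nat) : Prop :=
  a * b + c * d <= a * d + c * b /\ a * b + c * d <= a * c + b * d.

(* A quartet inside a Phi-minimal tree is balanced: otherwise exchanging
   B with D, or B with C, would decrease Phi. *)
Lemma minimal_quartet n T A B C D : bphylo_n n T ->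
  subtree_at (Node (Node A B) (Node C D)) T ->
  (forall T' : btree, bphylo_n n T' -> Phi T <= Phi T') ->
  balanced_quartet (nleaves A) (nleaves B) (nleaves C) (nleaves D).
Proof.
move=> bT sub minT.
have u : uniq (leaves (Node (Node A B) (Node C D))).
  by apply: (subtree_uniq sub); rewrite (perm_uniq bT) iota_uniq.
have pAD : perm_eq (leaves (Node (Node A B) (Node C D)))
                   (leaves (Node (Node A D) (Node C B))).
  by apply/permP => p; rewrite /= !count_cat; lia.
have pAC : perm_eq (leaves (Node (Node A B) (Node C D)))
                   (leaves (Node (Node A C) (Node B D))).
  by apply/permP => p; rewrite /= !count_cat; lia.
have := minimal_subtree bT sub minT pAD; have := minimal_subtree bT sub minT pAC.
rewrite !Phi_quartet -?(perm_uniq pAD) -?(perm_uniq pAC) // /balanced_quartet.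
by set cA := 'C(nleaves A, 2); set cB := 'C(nleaves B, 2);
   set cC := 'C(nleaves C, 2); set cD := 'C(nleaves D, 2); lia.
Qed.

Lemma tiso_nleaves s t : tiso s t -> nleaves s = nleaves t.
Proof. by elim=> // *; rewrite /= !size_cat; lia. Qed.

Lemma tiso_cherry l x y : tiso l (Node x y) -> exists l1 l2, l = Node l1 l2 /\
  ((nleaves l1, nleaves l2) = (nleaves x, nleaves y) \/
   (nleaves l1, nleaves l2) = (nleaves y, nleaves x)).
Proof.
move=> I; inversion I as [|l1 l2 x' y' I1 I2|l1 l2 x' y' I1 I2]; subst.
all: exists l1, l2; split=> //.
- by left; rewrite (tiso_nleaves I1) (tiso_nleaves I2).
- by right; rewrite (tiso_nleaves I1) (tiso_nleaves I2).
Qed.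

Lemma tiso_quartet S A B C D : tiso S (Node (Node A B) (Node C D)) ->
  exists A' B' C' D', S = Node (Node A' B') (Node C' D') /\
    (balanced_quartet (nleaves A') (nleaves B') (nleaves C') (nleaves D') ->
     balanced_quartet (nleaves A) (nleaves B) (nleaves C) (nleaves D)).
Proof.
move=> I; inversion I as [|l r l' r' Il Ir|l r l' r' Il Ir]; subst.
all: have [A' [B' [-> eAB]]] := tiso_cherry Il.
all: have [C' [D' [-> eCD]]] := tiso_cherry Ir.
all: exists A', B', C', D'; split=> //.
all: case: eAB => [] [-> ->]; case: eCD => [] [-> ->].
all: by rewrite /balanced_quartet; lia.
Qed.

(* With c < a, balance of the pairing {a,b},{c,d} forces b <= d, since
   ab + cd <= ad + cb amounts to (a - c)(b - d) <= 0. *)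
Lemma balanced_quartet_le a b c d :
  c < a -> balanced_quartet a b c d -> b <= d.
Proof. by rewrite /balanced_quartet => ca [+ _]; nia. Qed.

End PhiMinimality.

Theorem mainTheorem8 (m n : nat) (T1 T2 T3 T4 T : btree) :
  perm_eq (leaves T1 ++ leaves T2 ++ leaves T3 ++ leaves T4) (iota 1 m) ->
  size (leaves T2) <= size (leaves T1) ->
  size (leaves T4) <= size (leaves T3) ->
  size (leaves T3) < size (leaves T1) ->
  m <= n ->
  bphylo_n n T ->
  (exists S, subtree_at S T /\ tiso S (Node (Node T1 T2) (Node T3 T4))) ->
  (forall T' : btree, bphylo_n n T' -> Phi T <= Phi T') ->
  size (leaves T2) <= size (leaves T4).
Proof.
move=> _ _ _ x3_lt_x1 _ bT [S [sub iso]] minT.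
have [A [B [C [D [eS balanced]]]]] := tiso_quartet iso.
rewrite {}eS in sub.
exact: balanced_quartet_le x3_lt_x1 (balanced (minimal_quartet bT sub minT)).
Qed.
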